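(* Let $s\ge2$ and constants $0<a<b$. Let $r(t)$, $t\ge0$, be a differentiable function with $$\dot r\ge a r^{s-1}-br^{2s-1},$$ with $r_0>0$ and $r_t\le1$ for all $t$. Let $k=a/b$ and $T=\inf\{t\ge0:r_t\ge k^2\}$. Then $$T\le\frac1{bk^2}\Big(\frac{2k}{r_0^{s-1}}+\log\frac1{1-k}\Big).$$ *)

From HB Require Import structures.
From mathcomp Require Import all_boot all_order all_algebra.
From mathcomp Require Import all_classical all_reals all_analysis.
Set Implicit Arguments. Unset Strict Implicit. Unset Printing Implicit Defensive.

(* Suppose r stays below k^2 on [0, T0], T0 the claimed bound.  Then r' > 0
   wherever r > 0, so r >= r 0 on [0, T0].  With P = r0^(s-1), the potential
     V y = (y / P - ln (k - y^2) / 2) / (b k)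
   then grows along r at least as fast as time: for u = r^(s-1) >= P the ODE
   reads r' >= b u (k - r u), and it splits as b (k - r u) <= r' / P and
   b r u <= r' r / (k - r^2), whose sum is V'(r) r' >= 1.  Hence
   T0 <= V (r T0) - V (r 0); but 0 < r < k^2 bounds this increment strictly
   below T0, the logarithm because k - r^2 >= k (1 - k). *)

From HB Require Import structures.
From mathcomp Require Import all_boot all_order all_algebra.
From mathcomp Require Import all_classical all_reals all_analysis.
From mathcomp Require Import ring lra.
Import Order.TTheory GRing.Theory Num.Theory.
Import numFieldNormedType.Exports.
Local Open Scope classical_set_scope.
Local Open Scope ring_scope.

Section real_functions.
Context {R : realType}.
Implicit Types (f : R -> R) (B : set R).

Lemma derivable_cvg_at_right f d : derivable f d 1 -> f x @[x --> d^'+] --> f d.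
Proof. by move=> /derivable1_diffP /differentiable_continuous /cvg_at_right_filter. Qed.

Lemma continuous_within_itv_of_derivable f a c : a < c ->
  (forall t, a < t <= c -> derivable f t 1) -> f x @[x --> a^'+] --> f a ->
  {within `[a, c], continuous f}.
Proof.
move=> ac fd fa; apply/continuous_within_itvP => //; split => //.
- move=> t; rewrite in_itv /= => /andP[ta tc].
  by apply/differentiable_continuous/derivable1_diffP/fd; rewrite ta ltW.
- apply/cvg_at_left_filter/differentiable_continuous/derivable1_diffP/fd.
  by rewrite ac lexx.
Qed.

Lemma right_continuous_le_at_inf f B l : has_lbound B -> B !=set0 ->
  (forall t, B t -> f t <= l) -> f x @[x --> (inf B)^'+] --> f (inf B) ->
  f (inf B) <= l.
Proof.
move=> Blb Bn0 fB fcvg; rewrite leNgt; apply/negP => lfB.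
apply: (not_near_at_rightP (inf B) (fun t => l < f t)).2 (cvgr_gt _ fcvg _ lfB) => e.
have [x Bx xB] := inf_adherent (gt0 e) (conj Bn0 Blb).
exists x; last by apply/negP; rewrite -leNgt fB.
rewrite xB andbT lt_def ge_inf // andbT.
by apply: contraTneq lfB => <-; rewrite -leNgt fB.
Qed.

Lemma ge_init_of_derive1_ge0_where_pos f a T :
  (forall t, a < t <= T -> derivable f t 1) -> f x @[x --> a^'+] --> f a ->
  0 < f a -> (forall t, a < t < T -> 0 < f t -> 0 <= derive1 f t) ->
  forall t, a <= t <= T -> f a <= f t.
Proof.
move=> fd fa fa0 fpos t1 /andP[at1 t1T]; rewrite leNgt; apply/negP => ft1.
pose l := Num.max (f t1) 0.
have fal : l < f a by rewrite gt_max ft1 fa0.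
pose B := [set t | a <= t <= t1 /\ f t <= l].
have Bt1 : B t1 by split; [rewrite at1 lexx | rewrite le_max lexx].
have Blb : has_lbound B by exists a => x [/andP[]].
have ad : a <= inf B by apply: lb_le_inf => [|x [/andP[]]//]; exists t1.
have dt1 : inf B <= t1 by exact: ge_inf.
have dT : inf B <= T := le_trans dt1 t1T.
have l_lt t : a <= t < inf B -> l < f t.
  move=> /andP[ta td]; rewrite ltNge; apply/negP => ftl.
  suff : inf B <= t by rewrite leNgt td.
  by apply: ge_inf => //; split=> //; rewrite ta (le_trans (ltW td)).
have fdl : f (inf B) <= l.
  apply: right_continuous_le_at_inf => //; first by exists t1.
    by move=> t [].
  move: ad; rewrite le_eqVlt => /predU1P[<- //|ad].
  by apply/derivable_cvg_at_right/fd; rewrite ad dT.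
have {}ad : a < inf B.
  by rewrite lt_def ad andbT; apply: contraTneq fal => <-; rewrite -leNgt.
have : f a <= f (inf B).
  apply: (@ger0_derive1_le_cc _ f a (inf B)); rewrite ?in_itv /= ?lexx ?ltW //.
  - by move=> t /[!in_itv]/= /andP[ta td]; apply: fd; rewrite ta ltW // (lt_le_trans td).
  - move=> t /[!in_itv]/= /andP[ta td]; apply: fpos; first by rewrite ta (lt_le_trans td).
    by rewrite (le_lt_trans _ (l_lt t _)) ?le_max ?lexx ?orbT ?td ?ltW.
  - apply: continuous_within_itv_of_derivable => // t /andP[ta td]; apply: fd.
    by rewrite ta (le_trans td).
by rewrite leNgt (le_lt_trans fdl fal).
Qed.

End real_functions.

Section potential.
Context {R : realType}.

Lemma ode_rhsE (s a b y : R) : 0 < y ->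
  a * y `^ (s - 1) - b * y `^ (2 * s - 1) = y `^ (s - 1) * (a - b * y `^ s).
Proof.
move=> y0; have -> : y `^ (2 * s - 1) = y `^ (s - 1) * y `^ s.
  by rewrite -powRD; [congr (_ `^ _); lra | apply/implyP => _; rewrite gt_eqF].
by ring.
Qed.

Lemma ode_rhs_gt0 (s a b y : R) : 1 <= s -> 0 < b -> 0 < y <= 1 -> y < a / b ->
  0 < a * y `^ (s - 1) - b * y `^ (2 * s - 1).
Proof.
move=> s1 b0 /andP[y0 y1] yab; rewrite ode_rhsE // mulr_gt0 ?powR_gt0 // subr_gt0.
by rewrite mulrC -ltr_pdivlMr // (le_lt_trans _ yab) // ge1r_powR ?y0.
Qed.

Lemma potential_slope_ge (b k P y u v : R) : 0 < b -> 0 < P -> P <= u -> 0 < y ->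
  y * u <= y ^+ 2 -> y ^+ 2 < k -> b * u * (k - y * u) <= v ->
  b * k <= v * (P^-1 + y / (k - y ^+ 2)).
Proof.
move=> b0 P0 Pu y0 yu yk uv.
have q0 : 0 < k - y ^+ 2 by rewrite subr_gt0.
have qw : k - y ^+ 2 <= k - y * u by lra.
have u0 : 0 < u := lt_le_trans P0 Pu.
have v_P : b * (k - y * u) <= v / P.
  rewrite ler_pdivlMr //; apply: le_trans uv.
  by rewrite mulrAC ler_pM2r ?ler_pM2l // subr_gt0 (le_lt_trans yu).
have v_y : b * (y * u) <= v * (y / (k - y ^+ 2)).
  rewrite [v * _]mulrA ler_pdivlMr //; apply: le_trans (_ : b * u * (k - y * u) * y <= _).
    by have := ler_wpM2l (ltW (mulr_gt0 (mulr_gt0 b0 u0) y0)) qw; lra.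
  by rewrite ler_pM2r.
by rewrite mulrDr; lra.
Qed.

Definition potential (b k P y : R) : R := (y / P - ln (k - y ^+ 2) / 2) / (b * k).

Definition potential_deriv (b k P y : R) : R := (P^-1 + y / (k - y ^+ 2)) / (b * k).

Lemma is_derive_potential (b k P y : R) : 0 < k - y ^+ 2 ->
  is_derive y 1 (potential b k P) (potential_deriv b k P y).
Proof.
move=> ky.
have dq : is_derive y 1 (fun z : R => k - z ^+ 2) (- (2 * y)).
  by apply: is_derive_eq; rewrite add0r mul1r [_%:A]mulr1 mulr_natl mulr2n.
(* [dlnq] is used by instance resolution in [is_derive_eq]. *)
have dlnq :=
  @is_derive1_comp _ (@ln R) (fun z => k - z ^+ 2) _ _ _ (is_derive1_ln ky) dq.
rewrite /potential /potential_deriv; apply: is_derive_eq.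
rewrite !scaler0 !add0r [_%:A]mulr1 [RHS]mulrC; congr (_ * (_ + _)).
by rewrite /GRing.scale /=; field; rewrite gt_eqF.
Qed.

Lemma potential_deriv_ode_ge1 (s a b P y v : R) : 2 <= s -> 0 < a -> 0 < b -> 0 < P ->
  P <= y `^ (s - 1) -> 0 < y <= 1 -> y ^+ 2 < a / b ->
  a * y `^ (s - 1) - b * y `^ (2 * s - 1) <= v ->
  1 <= potential_deriv b (a / b) P y * v.
Proof.
move=> s2 a0 b0 P0 Pu /andP[y0 y1] yk; rewrite ode_rhsE // => rhs_v.
have ab : b * (a / b) = a by rewrite mulrC divfK ?gt_eqF.
rewrite /potential_deriv mulrAC ler_pdivlMr ?mul1r; last by rewrite ab.
rewrite [leRHS]mulrC; apply: (potential_slope_ge _ _ _ _ (y `^ (s - 1))) => //.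
  by rewrite expr2 ler_pM2l // ge1r_powR ?y0 //; lra.
apply: le_trans rhs_v; rewrite -[y `^ s](mulr_powRB1 (ltW y0)); last by lra.
by rewrite le_eqVlt; apply/predU1P; left; field; rewrite gt_eqF.
Qed.

Definition hitting_bound (b k P : R) : R :=
  (b * k ^+ 2)^-1 * (2 * k / P + ln (1 / (1 - k))).

Lemma hitting_bound_gt0 (b k P : R) : 0 < b -> 0 < k < 1 -> 0 < P ->
  0 < hitting_bound b k P.
Proof.
move=> b0 /andP[k0 k1] P0; rewrite mulr_gt0 ?invr_gt0 ?mulr_gt0 ?exprn_gt0 //.
rewrite ltr_pwDl ?divr_gt0 ?mulr_gt0 // ln_ge0 // div1r invf_ge1 ?subr_gt0 //.
by rewrite gerBl ltW.
Qed.

Lemma potential_increment_lt (b k P y0 y1 : R) : 0 < b -> 0 < k < 1 -> 0 < P ->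
  0 < y0 < k ^+ 2 -> 0 < y1 < k ^+ 2 ->
  potential b k P y1 - potential b k P y0 < hitting_bound b k P.
Proof.
move=> b0 /andP[k0 k1] P0 /andP[y00 y0k] /andP[y10 y1k].
have kk : k ^+ 2 < k by rewrite expr2 gtr_pMr.
have sq_lt z : 0 < z < k ^+ 2 -> z ^+ 2 < k ^+ 2.
  by case/andP=> z0 zk; rewrite ltr_pXn2r ?nnegrE ?ltW // (lt_trans zk kk).
have ln0 : ln (k - y0 ^+ 2) <= ln k.
  rewrite ler_ln ?posrE ?gerBl ?sqr_ge0 // subr_gt0.
  by rewrite (lt_trans (sq_lt _ _) kk) ?y00.
have ln1 : ln k + ln (1 - k) <= ln (k - y1 ^+ 2).
  have := sq_lt y1; rewrite y10 y1k => /(_ isT) y1k2.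
  rewrite -lnM ?posrE ?subr_gt0 // ler_ln ?posrE ?mulr_gt0 ?subr_gt0 ?(lt_trans y1k2) //.
  by rewrite mulrBr mulr1 -expr2 lerD2l lerN2 ltW.
have L0 : 0 <= - ln (1 - k) by rewrite oppr_ge0 ln_le0 // gerBl ltW.
have -> : hitting_bound b k P = (2 / P - ln (1 - k) / k) / (b * k).
  rewrite /hitting_bound div1r lnV ?posrE ?subr_gt0 //.
  by field; rewrite ?gt_eqF ?subr_gt0.
rewrite /potential -mulrBl ltr_pM2r ?invr_gt0 ?mulr_gt0 //.
have y1P : y1 / P < 2 / P.
  by rewrite ltr_pM2r ?invr_gt0 // (lt_trans y1k) // (lt_trans kk) // (lt_trans k1) ?ltr1n.
have y0P : 0 < y0 / P by rewrite divr_gt0.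
have L2k : - ln (1 - k) / 2 <= - ln (1 - k) / k.
  by rewrite ler_wpM2l // lef_pV2 ?posrE // (le_trans (ltW k1)) ?ler1n.
lra.
Qed.

End potential.

Section trajectory.
Context {R : realType} {s a b T : R} {r : R -> R}.
Hypotheses (s_ge2 : 2 <= s) (a_gt0 : 0 < a) (a_lt_b : a < b) (T_gt0 : 0 < T).
Hypothesis r_derivable : forall t : R, 0 < t -> derivable r t 1.
Hypothesis r_cvg0 : r x @[x --> 0^'+] --> r 0.
Hypothesis r_ode : forall t : R, 0 < t ->
  a * r t `^ (s - 1) - b * r t `^ (2 * s - 1) <= derive1 r t.
Hypothesis r0_gt0 : 0 < r 0.
Hypothesis r_le1 : forall t : R, 0 <= t -> r t <= 1.
Hypothesis r_below : forall t : R, 0 <= t <= T -> r t < (a / b) ^+ 2.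

Local Notation k := (a / b).
Local Notation P := (r 0 `^ (s - 1)).

Let b_gt0 : 0 < b := lt_trans a_gt0 a_lt_b.
Let k_gt0 : 0 < k := divr_gt0 a_gt0 b_gt0.
Let s_ge1 : 1 <= s := le_trans (ler1n R 2) s_ge2.
Let k2_lt_k : k ^+ 2 < k.
Proof. by rewrite expr2 gtr_pMr // ltr_pdivrMr // mul1r. Qed.

Lemma trajectory_ge_init (t : R) : 0 <= t <= T -> r 0 <= r t.
Proof.
apply: ge_init_of_derive1_ge0_where_pos => // [u /andP[u0 _]|u /andP[u0 uT] ru0].
  exact: r_derivable.
apply/ltW/(lt_le_trans _ (r_ode _ u0)); apply: ode_rhs_gt0 => //.
  by rewrite ru0 r_le1 ?ltW.
by apply: lt_trans (r_below u _) k2_lt_k; rewrite ltW ?(ltW uT).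
Qed.

Lemma trajectory_sq_lt (t : R) : 0 <= t <= T -> r t ^+ 2 < k.
Proof.
move=> tT; have rt0 := lt_le_trans r0_gt0 (trajectory_ge_init t tT).
apply: le_lt_trans (lt_trans (r_below t tT) k2_lt_k).
by rewrite expr2 ger_pMr // r_le1 // (andP tT).1.
Qed.

Lemma time_le_potential_increment :
  T <= potential b k P (r T) - potential b k P (r 0).
Proof.
have P_gt0 : 0 < P := powR_gt0 _ r0_gt0.
have in0T (t : R) : 0 < t <= T -> 0 <= t <= T by case/andP=> t0 ->; rewrite ltW.
have dpot (t : R) : 0 <= t <= T ->
    is_derive (r t) 1 (potential b k P) (potential_deriv b k P (r t)).
  by move=> tT; apply: is_derive_potential; rewrite subr_gt0 trajectory_sq_lt.
pose G t := potential b k P (r t) - t.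
have dG (t : R) : 0 < t <= T ->
    is_derive t 1 G (potential_deriv b k P (r t) * derive1 r t - 1).
  move=> tT; have dr : is_derive t 1 r (derive1 r t).
    by rewrite derive1E; exact/derivableP/r_derivable/(andP tT).1.
  have dGr := is_derive1_comp (dpot t (in0T t tT)) dr.
  by apply: is_derive_eq. (* through [dGr], by instance resolution *)
have G_cont : {within `[0, T], continuous G}.
  apply: continuous_within_itv_of_derivable => // [t tT|].
    by apply: ex_derive; exact: dG.
  apply: cvgB; last exact: cvg_at_right_filter cvg_id.
  apply: cvg_comp r_cvg0 _.
  have [+ _] := dpot 0 (andb_true_intro (conj (lexx 0) (ltW T_gt0))).
  by move=> /derivable1_diffP /differentiable_continuous.
have : G 0 <= G T.
  apply: (ger0_derive1_le_cc _ _ G_cont); rewrite ?in_itv /= ?lexx ?ltW //.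
    by move=> t /[!in_itv]/= /andP[t0 tT]; apply: ex_derive; apply: dG; rewrite t0 ltW.
  move=> t /[!in_itv]/= /andP[t0 tT].
  have t0T : 0 <= t <= T by rewrite ltW ?(ltW tT).
  have rt0 := lt_le_trans r0_gt0 (trajectory_ge_init t t0T).
  rewrite derive1E.
  have [_ ->] : is_derive t 1 G _ := dG t (andb_true_intro (conj t0 (ltW tT))).
  rewrite subr_ge0.
  apply: potential_deriv_ode_ge1 (r_ode _ t0) => //.
  - by apply: ge0_ler_powR; rewrite ?nnegrE ?subr_ge0 ?(ltW r0_gt0) ?(ltW rt0) ?trajectory_ge_init.
  - by rewrite rt0 r_le1 ?ltW.
  - exact: trajectory_sq_lt.
by rewrite /G subr0; lra.
Qed.

End trajectory.

Theorem lemmaH2 (R : realType) (s a b : R) (r : R -> R)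
  (hs : 2 <= s) (ha : 0 < a) (hab : a < b)
  (hder : forall t, 0 < t -> derivable r t 1)
  (hcont0 : r x @[x --> 0^'+] --> r 0)
  (hode : forall t, 0 < t ->
     a * r t `^ (s - 1) - b * r t `^ (2 * s - 1) <= derive1 r t)
  (hr0 : 0 < r 0)
  (hr1 : forall t, 0 <= t -> r t <= 1) :
  let k := a / b in
  let T := ereal_inf [set t%:E | t in [set t : R | 0 <= t /\ k ^+ 2 <= r t]] in
  (T <= ((b * k ^+ 2)^-1 * (2 * k / r 0 `^ (s - 1) + ln (1 / (1 - k))))%:E)%E.
Proof.
rewrite /=; set k := a / b; set P := r 0 `^ (s - 1).
have b_gt0 : 0 < b := lt_trans ha hab.
have k01 : 0 < k < 1 by rewrite divr_gt0 //= ltr_pdivrMr // mul1r.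
have bound_gt0 : 0 < hitting_bound b k P by apply: hitting_bound_gt0; rewrite ?powR_gt0.
suff [t /andP[t0 tT] rt] : exists2 t, 0 <= t <= hitting_bound b k P & k ^+ 2 <= r t.
  apply: le_trans (_ : t%:E <= _)%E; last by rewrite lee_fin.
  by apply: ereal_inf_lbound; exists t.
apply: contrapT => not_hit.
have below (t : R) : 0 <= t <= hitting_bound b k P -> r t < k ^+ 2.
  by move=> tT; rewrite ltNge; apply/negP => rt; apply: not_hit; exists t.
have bound_in : 0 <= hitting_bound b k P <= hitting_bound b k P by rewrite lexx ltW.
have := time_le_potential_increment hs ha hab bound_gt0 hder hcont0 hode hr0 hr1 below.
apply/negP; rewrite -ltNge; apply: potential_increment_lt; rewrite ?powR_gt0 //.
  by rewrite hr0 below // lexx ltW.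
rewrite below // (lt_le_trans hr0) //.
exact: (trajectory_ge_init hs ha hab hder hcont0 hode hr0 hr1 below).
Qed.
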